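(* Let $d\ge 2$. Let $A'_1,A'_2,A_1,A_2,\tilde A,B$ be quantum systems, each with Hilbert space $\mathbb{C}^d$, and let $\psi^+_{XY}$ denote the maximally entangled state $|\psi^+\rangle\langle\psi^+|$, $|\psi^+\rangle=\frac1{\sqrt d}\sum_{i=0}^{d-1}|ii\rangle$, on two such systems. Let $\rho_{\tilde AB}$ be an arbitrary state on $\tilde A B$, let $\{M^{(i)}\}_{i=1}^K$ (any $K\ge1$) be a POVM on $A_1A_2\tilde A$, and for each $i$ and $j\in\{1,2\}$ let $U^{(i,j)}_B$ be a unitary on $B$. Set $\Omega=\psi^+_{A'_1A_1}\otimes\psi^+_{A'_2A_2}\otimes\rho_{\tilde AB}$ and $$P_{\mathrm{succ}}=\frac12\sum_{j=1}^{2}\sum_{i=1}^{K}\operatorname{tr}\Big[\psi^+_{A'_jB}\,U^{(i,j)}_B\,\operatorname{tr}_{A_1A_2\tilde A A'_{\bar j}}\big[(M^{(i)}\otimes\mathbf 1)\,\Omega\big]\,U^{(i,j)\dagger}_B\Big],$$ where $\bar j$ denotes the index in $\{1,2\}$ different from $j$. Then $$P_{\mathrm{succ}}\le\frac{d+1}{2d}.$$ In particular, for $d=2$, $P_{\mathrm{succ}}\le 3/4$.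
   Context: This models the symmetric constrained-entanglement quantum random access code: Alice holds two $d$-dimensional inputs (purified by reference systems $A'_1,A'_2$), shares only a $d\times d$ state with Bob, may send unlimited classical communication (the outcome $i$ of her measurement), and Bob, depending on his uniformly random choice $j\in\{1,2\}$ and on $i$, applies a unitary aiming to reproduce input $j$; $P_{\mathrm{succ}}$ is the average entanglement fidelity of $B$ with $A'_j$. *)

From HB Require Import structures.
From mathcomp Require Import all_boot all_order all_algebra.
From mathcomp Require Import complex.
From mathcomp Require Import reals.
Set Implicit Arguments. Unset Strict Implicit. Unset Printing Implicit Defensive.
Import Order.TTheory GRing.Theory Num.Theory.
Local Open Scope ring_scope.

Section Ops.
Variable C : numClosedFieldType.

Definition op (T : finType) := T -> T -> C.

Definition opmul (T : finType) (A B : op T) : op T :=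
  fun x y => \sum_(z : T) A x z * B z y.
Definition adj (T : finType) (A : op T) : op T := fun x y => (A y x)^*.
Definition idop (T : finType) : op T := fun x y => (x == y)%:R.
Definition trace (T : finType) (A : op T) : C := \sum_(x : T) A x x.

Definition psd (T : finType) (A : op T) : Prop :=
  forall v : T -> C, 0 <= \sum_(x : T) \sum_(y : T) (v x)^* * A x y * v y.
Definition density (T : finType) (rho : op T) : Prop :=
  psd rho /\ trace rho = 1.
Definition unitary (T : finType) (U : op T) : Prop :=
  opmul U (adj U) = @idop T /\ opmul (adj U) U = @idop T.
Definition povm (T : finType) (K : nat) (M : 'I_K -> op T) : Prop :=
  (forall i, psd (M i)) /\ (forall x y, \sum_(i < K) M i x y = @idop T x y).

Definition tens (T1 T2 : finType) (A : op T1) (B : op T2) : op (T1 * T2)%type :=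
  fun x y => A x.1 y.1 * B x.2 y.2.

Definition psiplus (d : nat) : op ('I_d * 'I_d)%type :=
  fun x y => (x.1 == x.2)%:R * (y.1 == y.2)%:R / d%:R.

(* Index of the six-party system, ordered ((A'1,A1),(A'2,A2)),(Atilde,B). *)
Definition sys6 (d : nat) : finType :=
  (('I_d * 'I_d) * ('I_d * 'I_d) * ('I_d * 'I_d))%type.

Definition Omega (d : nat) (rho : op ('I_d * 'I_d)%type) : op (sys6 d) :=
  tens (tens (@psiplus d) (@psiplus d)) rho.

(* Coordinates (A1,A2,Atilde) and (A'1,A'2,B) of an index of sys6 *)
Definition projA (d : nat) (x : sys6 d) : ('I_d * 'I_d * 'I_d)%type :=
  (x.1.1.2, x.1.2.2, x.2.1).
Definition projRest (d : nat) (x : sys6 d) : ('I_d * 'I_d * 'I_d)%type :=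
  (x.1.1.1, x.1.2.1, x.2.2).

Definition liftA (d : nat) (M : op ('I_d * 'I_d * 'I_d)%type) : op (sys6 d) :=
  fun x y => M (projA x) (projA y) * @idop _ (projRest x) (projRest y).

(* Place p = (a, b) at (A'_j, B), and the traced-out coordinates
   r = ((a1, a2), (t, c)) at (A1, A2, Atilde, A'_jbar).  j = 0 means system 1. *)
Definition embed (d : nat) (j : 'I_2) (p : ('I_d * 'I_d)%type)
  (r : (('I_d * 'I_d) * ('I_d * 'I_d))%type) : sys6 d :=
  if j == ord0 then ((p.1, r.1.1), (r.2.2, r.1.2), (r.2.1, p.2))
  else ((r.2.2, r.1.1), (p.1, r.1.2), (r.2.1, p.2)).

Definition ptr_keep (d : nat) (j : 'I_2) (X : op (sys6 d)) : op ('I_d * 'I_d)%type :=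
  fun p q => \sum_(r : (('I_d * 'I_d) * ('I_d * 'I_d))%type) X (embed j p r) (embed j q r).

Definition Psucc (d K : nat) (rho : op ('I_d * 'I_d)%type)
  (M : 'I_K -> op ('I_d * 'I_d * 'I_d)%type) (U : 'I_K -> 'I_2 -> op 'I_d) : C :=
  2^-1 * \sum_(j < 2) \sum_(i < K)
    trace (opmul (@psiplus d)
      (opmul (tens (@idop 'I_d) (U i j))
        (opmul (ptr_keep j (opmul (liftA (M i)) (Omega rho)))
               (tens (@idop 'I_d) (adj (U i j)))))).
End Ops.

From HB Require Import structures.
From mathcomp Require Import all_boot all_order all_algebra.
From mathcomp Require Import complex.
From mathcomp Require Import reals.
From mathcomp Require Import ring.
Set Implicit Arguments. Unset Strict Implicit. Unset Printing Implicit Defensive.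
Import Order.TTheory GRing.Theory Num.Theory.
Local Open Scope ring_scope.

(* Write rho and every M^(i) as sums of rank-one operators (Cholesky).  Each
   pair of rank-one terms yields an amplitude X on A'_1 A'_2 B, and the fidelity
   of Bob's guess of input j is d^-2 |P_j X|^2, where P_j projects onto the unit
   vector conj(U^(i,j))/sqrt d of A'_j B tensored with the other leg.  Two such
   projections overlap by at most 1/d, whence
   |P_1 X|^2 + |P_2 X|^2 <= (1 + 1/d) |X|^2.  Summed over all terms and outcomes,
   d^-2 |X|^2 adds up to the total probability 1, so P_succ <= (1 + 1/d) / 2. *)

Section LinearAlgebra.
Variable C : numClosedFieldType.
Implicit Types T : finType.

Lemma sum_pair (T1 T2 : finType) (F : (T1 * T2)%type -> C) :
  \sum_x F x = \sum_a \sum_b F (a, b).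
Proof. by rewrite pair_bigA; apply: eq_bigr => -[]. Qed.

Lemma sum_pair_pair (T1 T2 T3 T4 : finType) (F : ((T1 * T2) * (T3 * T4))%type -> C) :
  \sum_x F x = \sum_a \sum_b \sum_c \sum_e F ((a, b), (c, e)).
Proof.
rewrite sum_pair sum_pair; apply: eq_bigr => a _; apply: eq_bigr => b _.
exact: sum_pair.
Qed.

Lemma sum_triple (T1 T2 T3 : finType) (F : (T1 * T2 * T3)%type -> C) :
  \sum_t F t = \sum_a \sum_c \sum_b F (a, c, b).
Proof. by rewrite !sum_pair. Qed.

Lemma exchange_big3 (T1 T2 T3 : finType) (F : T1 -> T2 -> T3 -> C) :
  \sum_a \sum_b \sum_c F a b c = \sum_c \sum_a \sum_b F a b c.
Proof. by under eq_bigr do rewrite exchange_big; rewrite exchange_big. Qed.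

Lemma exchange_big4 (T1 T2 T3 T4 : finType) (F : T1 -> T2 -> T3 -> T4 -> C) :
  \sum_a \sum_b \sum_c \sum_e F a b c e = \sum_e \sum_a \sum_b \sum_c F a b c e.
Proof. by under eq_bigr do rewrite exchange_big3; rewrite exchange_big. Qed.

Lemma exchange_big5 (T1 T2 T3 T4 T5 : finType) (F : T1 -> T2 -> T3 -> T4 -> T5 -> C) :
  \sum_a \sum_b \sum_c \sum_e \sum_f F a b c e f =
  \sum_f \sum_a \sum_b \sum_c \sum_e F a b c e f.
Proof. by under eq_bigr do rewrite exchange_big4; rewrite exchange_big. Qed.

Lemma ge0_conj (z : C) : 0 <= z -> z^* = z.
Proof. by move=> /ger0_real /conj_Creal. Qed.

Definition dot T (u v : T -> C) := \sum_t (u t)^* * v t.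

Lemma dotDl T (u1 u2 v : T -> C) : dot (fun t => u1 t + u2 t) v = dot u1 v + dot u2 v.
Proof. by rewrite /dot -big_split; apply: eq_bigr => t _; rewrite rmorphD mulrDl. Qed.

Lemma dotDr T (u v1 v2 : T -> C) : dot u (fun t => v1 t + v2 t) = dot u v1 + dot u v2.
Proof. by rewrite /dot -big_split; apply: eq_bigr => t _; rewrite mulrDr. Qed.

Lemma dotZl T c (u v : T -> C) : dot (fun t => c * u t) v = c^* * dot u v.
Proof. by rewrite /dot mulr_sumr; apply: eq_bigr => t _; rewrite rmorphM mulrA. Qed.

Lemma dotZr T c (u v : T -> C) : dot u (fun t => c * v t) = c * dot u v.
Proof. by rewrite /dot mulr_sumr; apply: eq_bigr => t _; rewrite mulrCA. Qed.

Lemma dotC T (u v : T -> C) : (dot u v)^* = dot v u.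
Proof. by rewrite /dot rmorph_sum; apply: eq_bigr => t _; rewrite rmorphM /= conjCK mulrC. Qed.

Lemma dot_ge0 T (u : T -> C) : 0 <= dot u u.
Proof. by apply: sumr_ge0 => t _; rewrite mulrC mul_conjC_ge0. Qed.

Definition sesq T (A : op C T) (u v : T -> C) :=
  \sum_x \sum_y (u x)^* * A x y * v y.

Definition delta T (x : T) : T -> C := fun z => (z == x)%:R.

Lemma psd_sesq_ge0 T (A : op C T) v : psd A -> 0 <= sesq A v v.
Proof. exact. Qed.

Section SesqLinear.
Variables (T : finType) (A : op C T).

Lemma sesqDl u1 u2 v : sesq A (fun z => u1 z + u2 z) v = sesq A u1 v + sesq A u2 v.
Proof.
rewrite /sesq -big_split; apply: eq_bigr => x _; rewrite -big_split.
by apply: eq_bigr => y _; rewrite rmorphD /= !mulrDl.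
Qed.

Lemma sesqDr u v1 v2 : sesq A u (fun z => v1 z + v2 z) = sesq A u v1 + sesq A u v2.
Proof.
rewrite /sesq -big_split; apply: eq_bigr => x _; rewrite -big_split.
by apply: eq_bigr => y _; rewrite !mulrDr.
Qed.

Lemma sesqZl c u v : sesq A (fun z => c * u z) v = c^* * sesq A u v.
Proof.
rewrite /sesq mulr_sumr; apply: eq_bigr => x _; rewrite mulr_sumr.
by apply: eq_bigr => y _; rewrite rmorphM /= !mulrA.
Qed.

Lemma sesqZr c u v : sesq A u (fun z => c * v z) = c * sesq A u v.
Proof.
rewrite /sesq mulr_sumr; apply: eq_bigr => x _; rewrite mulr_sumr.
by apply: eq_bigr => y _; rewrite mulrCA mulrA [c * _]mulrC -!mulrA.
Qed.

Lemma sesq_deltal x v : sesq A (delta x) v = \sum_y A x y * v y.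
Proof.
rewrite /sesq (big_only1 x) // => [|z /negbTE zx _]; last first.
  by apply: big1 => y _; rewrite /delta zx conjC0 !mul0r.
by apply: eq_bigr => y _; rewrite /delta eqxx conjC1 mul1r.
Qed.

Lemma sesq_deltar u y : sesq A u (delta y) = \sum_x (u x)^* * A x y.
Proof.
rewrite /sesq; apply: eq_bigr => x _; rewrite (big_only1 y) //.
  by rewrite /delta eqxx mulr1.
by move=> z /negbTE zy _; rewrite /delta zy mulr0.
Qed.

Lemma sesq_delta x y : sesq A (delta x) (delta y) = A x y.
Proof.
rewrite sesq_deltal (big_only1 y) /delta ?eqxx ?mulr1 // => z /negbTE -> _.
by rewrite mulr0.
Qed.

Lemma sesq_delta2 x y c :
  sesq A (fun z => delta x z + c * delta y z) (fun z => delta x z + c * delta y z) =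
  A x x + c * A x y + c^* * A y x + c^* * c * A y y.
Proof. by rewrite sesqDl !sesqDr !sesqZl !sesqZr !sesq_delta; ring. Qed.

End SesqLinear.

Section Positive.
Variables (T : finType) (A : op C T).
Hypothesis psdA : psd A.

Lemma psd_diag_ge0 x : 0 <= A x x.
Proof. by rewrite -sesq_delta; apply: psd_sesq_ge0. Qed.

Lemma psd_diag_real x : (A x x)^* = A x x.
Proof. exact/ge0_conj/psd_diag_ge0. Qed.

Lemma psd_hermitian x y : A y x = (A x y)^*.
Proof.
set u := A x y; set w := A y x.
(* the cross term of the form at [delta x + c delta y] is real for all [c] *)
have cross c : c^* * u^* + c * w^* = c * u + c^* * w.
  have := ge0_conj (psd_sesq_ge0 (fun z => delta x z + c * delta y z) psdA).
  rewrite sesq_delta2 -/u -/w !rmorphD !rmorphM /= conjCK !psd_diag_real.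
  move/eqP; rewrite -subr_eq0 => /eqP real_form.
  by apply/eqP; rewrite -subr_eq0 -real_form; apply/eqP; ring.
have e1 := cross 1; have ei := cross 'i.
rewrite conjC1 !mul1r in e1; rewrite conjCi in ei.
have ii : 1 + 'i * 'i = 0 :> C by rewrite -expr2 sqrCi addrN.
have : 2 * (w - u^*) = (u + w - (u^* + w^*)) + 'i * ('i * u + - 'i * w - (- 'i * u^* + 'i * w^*))
                       - (1 + 'i * 'i) * (u - w + u^* - w^*) by ring.
rewrite e1 ei ii !subrr mulr0 mul0r subr0 addr0 => /eqP.
by rewrite mulf_eq0 pnatr_eq0 /= subr_eq0 => /eqP.
Qed.

Lemma psd_row_eq0 x : A x x = 0 -> forall y, A x y = 0.
Proof.
move=> Axx0 y; apply/eqP/negPn/negP => Axy0.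
(* at [delta y + t delta x] the form equals [A y y + 2 Re (t A y x)], which is -1 *)
pose t := - (A y y + 1) / (2 * (A x y)^*).
have := psd_sesq_ge0 (fun z => delta y z + t * delta x z) psdA.
have tC : t^* = - (A y y + 1) / (2 * A x y).
  by rewrite /t fmorph_div /= rmorphN rmorphD /= psd_diag_real rmorph1 rmorphM /= conjCK conjC_nat.
rewrite sesq_delta2 Axx0 mulr0 addr0 (psd_hermitian x y) tC.
have -> : A y y + t * (A x y)^* + - (A y y + 1) / (2 * A x y) * A x y = -1.
  by rewrite /t; field; rewrite Axy0 conjC_eq0 Axy0.
by rewrite ler0N1.
Qed.

Lemma psd_schur x : A x x != 0 -> psd (fun y z => A y z - A y x * (A x z / A x x)).
Proof.
move=> Axx0 v; pose b := \sum_y A x y * v y.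
have vAx : \sum_y (v y)^* * A y x = b^*.
  by rewrite rmorph_sum; apply: eq_bigr => y _; rewrite rmorphM /= (psd_hermitian x y) mulrC.
(* completing the square: the form of [A] at [v - (b / A x x) delta x] *)
have := psd_sesq_ge0 (fun z => v z + (- b / A x x) * delta x z) psdA.
rewrite sesqDl !sesqDr !sesqZl !sesqZr sesq_delta sesq_deltal sesq_deltar vAx -/b.
rewrite fmorph_div rmorphN /= psd_diag_real.
have -> : sesq A v v + - b / A x x * b^*
            + (- b^* / A x x * b + - b^* / A x x * (- b / A x x * A x x))
          = sesq A v v - b^* * (b / A x x) by field.
congr (0 <= _); rewrite /sesq -vAx mulr_suml -sumrB; apply: eq_bigr => y _.
rewrite /b mulr_suml mulr_sumr -sumrB; apply: eq_bigr => z _; ring.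
Qed.

End Positive.

Lemma psd_gram_seq T (A : op C T) : psd A ->
  exists s : seq (T -> C), forall x y, A x y = \sum_(r <- s) r x * (r y)^*.
Proof.
(* Cholesky factorization, by induction on a set [S] outside which rows vanish *)
suff gram n (S : {set T}) (B : op C T) : (#|S| <= n)%N -> psd B ->
    (forall x y, x \notin S -> B x y = 0) ->
    exists s : seq (T -> C), forall x y, B x y = \sum_(r <- s) r x * (r y)^*.
  by move=> psdA; apply: (gram _ [set: T]) => // x y; rewrite inE.
elim: n S B => [|n IH] S B cardS psdB offS.
  exists [::] => x y; rewrite big_nil offS //.
  by move: cardS; rewrite leqn0 cards_eq0 => /eqP ->; rewrite inE.
have [S0 | [x0 Sx0]] := set_0Vmem S.
  by exists [::] => x y; rewrite big_nil offS // S0 inE.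
have cardS' : (#|S :\ x0| <= n)%N by move: cardS; rewrite (cardsD1 x0) Sx0.
have offS' (B' : op C T) : (forall y, B' x0 y = 0) -> (forall x y, x \notin S -> B' x y = 0) ->
    forall x y, x \notin S :\ x0 -> B' x y = 0.
  move=> row0 off x y; rewrite !inE negb_and negbK.
  by case/orP => [/eqP -> | ]; [exact: row0 | exact: off].
have [Bx0 | Bx0] := eqVneq (B x0 x0) 0.
  by apply: (IH (S :\ x0)) => //; apply: offS' => //; exact: psd_row_eq0.
pose a := B x0 x0; pose k := (sqrtC a)^-1.
have kk : k * k^* = a^-1.
  by rewrite ge0_conj ?invr_ge0 ?sqrtC_ge0 ?psd_diag_ge0 // -expr2 exprVn sqrtCK.
pose B' x y := B x y - B x x0 * (B x0 y / a).
have offB' : forall x y, x \notin S :\ x0 -> B' x y = 0.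
  apply: offS' => [y | x y Sx]; rewrite /B'.
  - by rewrite mulrCA divff // mulr1 subrr.
  - by rewrite (offS x y) // (offS x x0) // mul0r subrr.
have [s Bs] := IH _ B' cardS' (psd_schur psdB Bx0) offB'.
exists ((fun x => B x x0 * k) :: s) => x y.
by rewrite big_cons -Bs /B' rmorphM /= -psd_hermitian // mulrACA kk; ring.
Qed.

Lemma psd_gram T (A : op C T) : psd A ->
  exists n (f : 'I_n -> T -> C), forall x y, A x y = \sum_i f i x * (f i y)^*.
Proof.
move=> /psd_gram_seq[s As]; exists (size s), (nth (fun _ => 0) s) => x y.
by rewrite As (big_nth (fun _ => 0)) big_mkord.
Qed.

Lemma projections_norm_le T (x p q : T -> C) (e : C) : 0 < e ->
  dot x p = dot p p -> dot x q = dot q q ->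
  dot p q + dot q p <= (dot p p + dot q q) / e ->
  e * (dot p p + dot q q) <= (e + 1) * dot x x.
Proof.
move=> e0 xp xq pq.
have e1 : 0 < e + 1 by rewrite addr_gt0.
(* [|x - l (p + q)|^2 >= 0] plus a nonnegative multiple of the overlap bound *)
pose l := e / (e + 1).
have l0 : 0 <= l by rewrite divr_ge0 // ltW.
have px : dot p x = dot p p by rewrite -dotC xp ge0_conj ?dot_ge0.
have qx : dot q x = dot q q by rewrite -dotC xq ge0_conj ?dot_ge0.
set S := dot p p + dot q q; set P := dot p q + dot q p.
have expand : dot x x - 2 * l * S + l * l * (S + P) =
    dot (fun t => x t + (- l) * (p t + q t)) (fun t => x t + (- l) * (p t + q t)).
  rewrite dotDl !dotDr !dotZl !dotZr !dotDl !dotDr xp xq px qx rmorphN /= ge0_conj //.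
  by rewrite /S /P; ring.
rewrite -subr_ge0.
have -> : (e + 1) * dot x x - e * S =
    (e + 1) * (dot x x - 2 * l * S + l * l * (S + P)) + (e + 1) * (l * l) * (S / e - P).
  by rewrite /l; field; rewrite !gt_eqF.
rewrite expand; apply: addr_ge0; apply: mulr_ge0.
- exact: ltW.
- exact: dot_ge0.
- by apply: mulr_ge0; [exact: ltW | exact: mulr_ge0].
- by rewrite subr_ge0.
Qed.

Definition swap12 (T1 T2 T3 : Type) (t : (T1 * T2 * T3)%type) : (T2 * T1 * T3)%type :=
  (t.1.2, t.1.1, t.2).

Lemma swap12K (T1 T2 T3 : Type) :
  cancel (@swap12 T1 T2 T3) (@swap12 T2 T1 T3).
Proof. by case=> [[]]. Qed.

Lemma dot_swap12r (T1 T2 T3 : finType) (u : (T1 * T2 * T3)%type -> C)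
    (v : (T2 * T1 * T3)%type -> C) :
  dot u (v \o @swap12 _ _ _) = dot (u \o @swap12 _ _ _) v.
Proof.
rewrite /dot [RHS](reindex (@swap12 T1 T2 T3)) /=.
  by apply: eq_bigr => -[[]].
by apply: onW_bij; exists (@swap12 T2 T1 T3); exact: swap12K.
Qed.

Lemma dot_swap12 (T1 T2 T3 : finType) (u v : (T1 * T2 * T3)%type -> C) :
  dot (u \o @swap12 _ _ _) (v \o @swap12 _ _ _) = dot u v.
Proof. by rewrite dot_swap12r /dot; apply: eq_bigr => -[[]]. Qed.

Section Unitary.
Variables (d : nat) (U : op C 'I_d).
Hypotheses (unitaryU : unitary U) (d_gt0 : (0 < d)%N).

Lemma unitary_rows a a' : \sum_b U a b * (U a' b)^* = (a == a')%:R.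
Proof. by case: unitaryU => /(congr1 (fun f => f a a')). Qed.

Lemma unitary_sqnorm : \sum_a \sum_b U a b * (U a b)^* = d%:R.
Proof.
under eq_bigr do rewrite unitary_rows eqxx.
by rewrite sumr_const card_ord.
Qed.

Lemma dot_unitaryT (w : 'I_d -> C) :
  dot (fun b => \sum_a U a b * w a) (fun b => \sum_a U a b * w a) = dot w w.
Proof.
rewrite /dot; under eq_bigr do rewrite rmorph_sum big_distrlr /=.
rewrite exchange_big; apply: eq_bigr => a _; rewrite exchange_big.
rewrite (big_only1 a) // => [|a' a'a _].
  transitivity ((w a)^* * w a * \sum_b U a b * (U a b)^*).
    by rewrite mulr_sumr; apply: eq_bigr => b _; rewrite rmorphM /=; ring.
  by rewrite unitary_rows eqxx mulr1.
transitivity ((w a)^* * w a' * \sum_b U a' b * (U a b)^*).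
  by rewrite mulr_sumr; apply: eq_bigr => b _; rewrite rmorphM /=; ring.
by rewrite unitary_rows (negbTE a'a) mulr0.
Qed.

Definition contract (X : 'I_d * 'I_d * 'I_d -> C) (c : 'I_d) : C :=
  \sum_a \sum_b U a b * X (a, c, b).

(* The orthogonal projection onto conj(U)/sqrt d, a unit vector of legs 1 and 3,
   tensored with leg 2. *)
Definition project (X : 'I_d * 'I_d * 'I_d -> C) (t : 'I_d * 'I_d * 'I_d) : C :=
  (U t.1.1 t.2)^* * contract X t.1.2 / d%:R.

Lemma dot_project X :
  dot (project X) (project X) = dot (contract X) (contract X) / d%:R.
Proof.
have d0 : d%:R != 0 :> C by rewrite pnatr_eq0 -lt0n.
rewrite /dot sum_triple.
transitivity (\sum_a \sum_b U a b * (U a b)^* *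
                \sum_c (contract X c)^* * contract X c / (d%:R * d%:R)).
  apply: eq_bigr => a _; rewrite exchange_big; apply: eq_bigr => b _; rewrite mulr_sumr.
  apply: eq_bigr => c _; rewrite /project /= !rmorphM fmorphV /= conjCK conjC_nat.
  by field.
under eq_bigr do rewrite -mulr_suml.
by rewrite -!mulr_suml unitary_sqnorm; field.
Qed.

Lemma dot_project_r X : dot X (project X) = dot (contract X) (contract X) / d%:R.
Proof.
rewrite /dot sum_triple exchange_big mulr_suml; apply: eq_bigr => c _.
rewrite {1}/contract rmorph_sum !mulr_suml; apply: eq_bigr => a _.
rewrite rmorph_sum !mulr_suml; apply: eq_bigr => b _.
by rewrite /project /= rmorphM /=; ring.
Qed.

End Unitary.

Section TwoUnitaries.
Variables (d : nat) (U1 U2 : op C 'I_d).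
Hypotheses (d_gt0 : (0 < d)%N) (unitaryU1 : unitary U1) (unitaryU2 : unitary U2).
Implicit Type X : 'I_d * 'I_d * 'I_d -> C.

Lemma dot_project_swap X :
  dot (project U1 X) (project U2 (X \o @swap12 _ _ _) \o @swap12 _ _ _) =
  dot (fun b => \sum_c U2 c b * contract U1 X c)
      (fun b => \sum_a U1 a b * contract U2 (X \o @swap12 _ _ _) a) / (d%:R * d%:R).
Proof.
have d0 : d%:R != 0 :> C by rewrite pnatr_eq0 -lt0n.
rewrite /dot sum_triple mulr_suml.
transitivity (\sum_b \sum_c \sum_a U1 a b * contract U2 (X \o @swap12 _ _ _) a *
                (U2 c b * contract U1 X c)^* / (d%:R * d%:R)).
  rewrite exchange_big [RHS]exchange_big; apply: eq_bigr => c _.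
  rewrite [RHS]exchange_big; apply: eq_bigr => a _; apply: eq_bigr => b _.
  by rewrite /project /= !rmorphM fmorphV /= conjCK conjC_nat; field.
apply: eq_bigr => b _; rewrite rmorph_sum !mulr_suml; apply: eq_bigr => c _.
by rewrite mulr_sumr mulr_suml; apply: eq_bigr => a _; ring.
Qed.

Lemma contract_sqnorm_le X :
  dot (contract U1 X) (contract U1 X) +
  dot (contract U2 (X \o @swap12 _ _ _)) (contract U2 (X \o @swap12 _ _ _))
  <= (d%:R + 1) * dot X X.
Proof.
have d0 : 0 < d%:R :> C by rewrite ltr0n.
set P := dot (contract U1 X) _; set Q := dot (contract U2 _) _.
pose p := project U1 X; pose q := project U2 (X \o @swap12 _ _ _) \o @swap12 _ _ _.
have pp : dot p p = P / d%:R by exact: dot_project.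
have qq : dot q q = Q / d%:R by rewrite dot_swap12 dot_project.
have xp : dot X p = dot p p by rewrite pp; exact: dot_project_r.
have xq : dot X q = dot q q by rewrite qq dot_swap12r dot_project_r.
(* by unitarity [f] and [g] have norms [Q] and [P], which bounds the overlap *)
set f := fun b => \sum_a U1 a b * contract U2 (X \o @swap12 _ _ _) a.
set g := fun b => \sum_c U2 c b * contract U1 X c.
have pq : dot p q = dot g f / (d%:R * d%:R) by exact: dot_project_swap.
have qp : dot q p = dot f g / (d%:R * d%:R).
  by rewrite -dotC pq fmorph_div rmorphM /= conjC_nat dotC.
have fgP : dot g f + dot f g <= P + Q.
  rewrite -subr_ge0.
  have -> : P + Q - (dot g f + dot f g) =
            dot (fun b => f b + (-1) * g b) (fun b => f b + (-1) * g b).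
    by rewrite dotDl !dotDr !dotZl !dotZr !dot_unitaryT // rmorphN rmorph1 -/P -/Q; ring.
  exact: dot_ge0.
have dn0 : d%:R != 0 :> C by rewrite gt_eqF.
have pq_le : dot p q + dot q p <= (dot p p + dot q q) / d%:R.
  rewrite pq qp pp qq -mulrDl.
  have -> : (P / d%:R + Q / d%:R) / d%:R = (P + Q) / (d%:R * d%:R) by field.
  by rewrite ler_wpM2r // invr_ge0 mulr_ge0 // ltW.
have := projections_norm_le d0 xp xq pq_le.
by rewrite pp qq (_ : d%:R * _ = P + Q) //; field.
Qed.

End TwoUnitaries.
End LinearAlgebra.

Section Protocol.
Variables (C : numClosedFieldType) (d : nat).
Local Notation I := 'I_d.
Implicit Types (M : op C (I * I * I)%type) (rho : op C (I * I)%type) (p q : (I * I)%type).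

Ltac case_deltas :=
  rewrite ?xpair_eqE; repeat (case: eqP => [?|?]; subst);
  rewrite /= ?eqxx //= ?(mul0r, mulr0, mul1r, mulr1) //.

Lemma liftA_Omega_mulE (M : op C (I * I * I)%type) (rho : op C (I * I)%type) (x y : sys6 d) :
  opmul (liftA M) (Omega rho) x y =
  (y.1.1.1 == y.1.1.2)%:R * (y.1.2.1 == y.1.2.2)%:R / (d%:R * d%:R) *
  \sum_s M (projA x) (x.1.1.1, x.1.2.1, s) * rho (s, x.2.2) y.2.
Proof.
case: x => [[[x11 x12] [x21 x22]] [x31 x32]].
case: y => [[[y11 y12] [y21 y22]] [y31 y32]].
rewrite /opmul sum_pair; under eq_bigr do rewrite sum_pair.
rewrite exchange_big mulr_sumr; apply: eq_bigr => s _.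
rewrite (big_only1 ((x11, x11), (x21, x21))) // => [|[[z11 z12] [z21 z22]] z _].
  rewrite (big_only1 x32) // => [|z32 z _].
    by rewrite /liftA /Omega /tens /psiplus /idop /projA /projRest /= !eqxx /= invfM; ring.
  by move: z; rewrite /liftA /Omega /tens /psiplus /idop /projA /projRest /=; case_deltas.
apply: big1 => zb _.
by move: z; rewrite /liftA /Omega /tens /psiplus /idop /projA /projRest /=; case_deltas.
Qed.

Lemma ptr_keep0E M rho p q :
  ptr_keep ord0 (opmul (liftA M) (Omega rho)) p q =
  (d%:R * d%:R)^-1 * \sum_c \sum_t \sum_s M (q.1, c, t) (p.1, c, s) * rho (s, p.2) (t, q.2).
Proof.
case: p => p1 p2; case: q => q1 q2.
rewrite /ptr_keep sum_pair_pair (big_only1 q1) // => [|a1 a1q _]; last first.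
  apply: big1 => a2 _; apply: big1 => t _; apply: big1 => c _.
  by rewrite liftA_Omega_mulE /embed /=; move: a1q; case_deltas.
rewrite mulr_sumr; apply: eq_bigr => c _; rewrite mulr_sumr; apply: eq_bigr => t _.
rewrite (big_only1 c) // => [|c' c'c _]; last first.
  by rewrite liftA_Omega_mulE /embed /=; move: c'c; case_deltas.
by rewrite liftA_Omega_mulE /embed /projA /= !eqxx /= !mul1r mulr_sumr.
Qed.

Lemma ptr_keep1E M rho p q :
  ptr_keep (lift ord0 ord0) (opmul (liftA M) (Omega rho)) p q =
  (d%:R * d%:R)^-1 * \sum_c \sum_t \sum_s M (c, q.1, t) (c, p.1, s) * rho (s, p.2) (t, q.2).
Proof.
case: p => p1 p2; case: q => q1 q2.
rewrite /ptr_keep sum_pair_pair mulr_sumr; apply: eq_bigr => c _.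
rewrite (big_only1 q1) // => [|a2 a2q _]; last first.
  apply: big1 => t _; apply: big1 => c' _.
  by rewrite liftA_Omega_mulE /embed /=; move: a2q; case_deltas.
rewrite mulr_sumr; apply: eq_bigr => t _.
rewrite (big_only1 c) // => [|c' c'c _]; last first.
  by rewrite liftA_Omega_mulE /embed /=; move: c'c; case_deltas.
by rewrite liftA_Omega_mulE /embed /projA /= !eqxx /= !mul1r mulr_sumr.
Qed.

Lemma trace_psiplus_mulE (Y : op C (I * I)%type) :
  trace (opmul (@psiplus C d) Y) = d%:R^-1 * \sum_a \sum_a' Y (a', a') (a, a).
Proof.
rewrite /trace sum_pair mulr_sumr; apply: eq_bigr => a _.
rewrite (big_only1 a) // => [|a2 a2a _]; last first.
  by apply: big1 => q _; rewrite /psiplus /= eq_sym (negbTE a2a) !mul0r.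
rewrite /opmul sum_pair mulr_sumr; apply: eq_bigr => a' _.
rewrite (big_only1 a') // => [|a2 a2a' _]; last first.
  by rewrite /psiplus /= eq_sym (negbTE a2a') /=; ring.
by rewrite /psiplus /= !eqxx /= !mul1r; ring.
Qed.

Lemma conj_id_tensorE (sigma : op C (I * I)%type) (U : op C I) p q :
  opmul (tens (@idop C I) U) (opmul sigma (tens (@idop C I) (adj U))) p q =
  \sum_b \sum_b' U p.2 b * sigma (p.1, b) (q.1, b') * (U q.2 b')^*.
Proof.
case: p => p1 p2; case: q => q1 q2.
rewrite /opmul sum_pair (big_only1 p1) // => [|z z1 _]; last first.
  by apply: big1 => b _; rewrite /tens /idop /= eq_sym (negbTE z1) !mul0r.
apply: eq_bigr => b _; rewrite sum_pair (big_only1 q1) // => [|z z1 _]; last first.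
  by apply: big1 => b' _; rewrite /tens /idop /= (negbTE z1) !(mul0r, mulr0).
rewrite mulr_sumr; apply: eq_bigr => b' _.
by rewrite /tens /idop /adj /= !eqxx !mul1r; ring.
Qed.

Definition psiplus_fidelity (sigma : op C (I * I)%type) (U : op C I) : C :=
  trace (opmul (@psiplus C d)
    (opmul (tens (@idop C I) U) (opmul sigma (tens (@idop C I) (adj U))))).

Lemma psiplus_fidelity_gram (J : finType) (sigma : op C (I * I)%type) (Y : J -> I -> I -> C) k
    (U : op C I) :
  (forall p q, sigma p q = k * \sum_j Y j p.1 p.2 * (Y j q.1 q.2)^*) ->
  psiplus_fidelity sigma U =
  d%:R^-1 * (k * \sum_j (\sum_a \sum_b U a b * Y j a b)^* * (\sum_a \sum_b U a b * Y j a b)).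
Proof.
move=> sigmaE; rewrite /psiplus_fidelity trace_psiplus_mulE; congr (_ * _).
under eq_bigr do under eq_bigr do rewrite conj_id_tensorE.
transitivity (k * \sum_a \sum_a' \sum_b \sum_b' \sum_j U a' b * Y j a' b * (U a b' * Y j a b')^*).
  rewrite mulr_sumr; apply: eq_bigr => a _; rewrite mulr_sumr; apply: eq_bigr => a' _.
  rewrite mulr_sumr; apply: eq_bigr => b _; rewrite mulr_sumr; apply: eq_bigr => b' _.
  by rewrite sigmaE /= !mulr_sumr mulr_suml; apply: eq_bigr => j _; rewrite rmorphM /=; ring.
congr (_ * _); rewrite exchange_big5; apply: eq_bigr => j _.
rewrite rmorph_sum big_distrlr /=; apply: eq_bigr => a _.
apply: eq_bigr => a' _; rewrite rmorph_sum mulr_suml exchange_big; apply: eq_bigr => b' _.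
by rewrite mulr_sumr; apply: eq_bigr => b _; rewrite rmorphM /=; ring.
Qed.

(* d times <fm m| (psi+ (x) psi+ (x) fr r), as a vector of A'_1 A'_2 B. *)
Definition amplitude (Jr Jm : finType) (fr : Jr -> (I * I)%type -> C)
    (fm : Jm -> (I * I * I)%type -> C) r m (t : (I * I * I)%type) : C :=
  \sum_s (fm m (t.1.1, t.1.2, s))^* * fr r (s, t.2).

Section Gram.
Variables (Jr Jm : finType) (fr : Jr -> (I * I)%type -> C) (fm : Jm -> (I * I * I)%type -> C).
Variables (M : op C (I * I * I)%type) (rho : op C (I * I)%type).
Hypotheses (M_gram : forall x y, M x y = \sum_m fm m x * (fm m y)^*)
           (rho_gram : forall x y, rho x y = \sum_r fr r x * (fr r y)^*).
Local Notation X j := (amplitude fr fm j.1.1 j.1.2).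

Lemma gram_sum (e : I -> I -> I -> (I * I * I)%type) p q :
  \sum_c \sum_t \sum_s M (e q.1 c t) (e p.1 c s) * rho (s, p.2) (t, q.2) =
  \sum_(j : Jr * Jm * I) (\sum_s (fm j.1.2 (e p.1 j.2 s))^* * fr j.1.1 (s, p.2)) *
                          (\sum_s (fm j.1.2 (e q.1 j.2 s))^* * fr j.1.1 (s, q.2))^*.
Proof.
rewrite sum_triple.
under eq_bigr do under eq_bigr do under eq_bigr do rewrite M_gram rho_gram big_distrlr /=.
under [RHS]eq_bigr do under eq_bigr do under eq_bigr do rewrite rmorph_sum big_distrlr /=.
rewrite exchange_big5; apply: eq_bigr => r _.
rewrite exchange_big4; apply: eq_bigr => m _; apply: eq_bigr => c _.
rewrite exchange_big; apply: eq_bigr => s _; apply: eq_bigr => t _.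
by rewrite rmorphM /= conjCK; ring.
Qed.

Lemma ptr_keep0_gram p q :
  ptr_keep ord0 (opmul (liftA M) (Omega rho)) p q =
  (d%:R * d%:R)^-1 * \sum_(j : Jr * Jm * I) X j (p.1, j.2, p.2) * (X j (q.1, j.2, q.2))^*.
Proof. by rewrite ptr_keep0E (gram_sum (fun a c s => (a, c, s))). Qed.

Lemma ptr_keep1_gram p q :
  ptr_keep (lift ord0 ord0) (opmul (liftA M) (Omega rho)) p q =
  (d%:R * d%:R)^-1 * \sum_(j : Jr * Jm * I) X j (j.2, p.1, p.2) * (X j (j.2, q.1, q.2))^*.
Proof. by rewrite ptr_keep1E (gram_sum (fun a c s => (c, a, s))). Qed.

Lemma sum_ptr_keep0_gram :
  \sum_p ptr_keep ord0 (opmul (liftA M) (Omega rho)) p p =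
  (d%:R * d%:R)^-1 * \sum_r \sum_m dot (amplitude fr fm r m) (amplitude fr fm r m).
Proof.
under eq_bigr do rewrite ptr_keep0_gram.
rewrite -mulr_sumr sum_pair; congr (_ * _).
under eq_bigr do under eq_bigr do rewrite sum_triple.
rewrite exchange_big3; apply: eq_bigr => r _; rewrite exchange_big3; apply: eq_bigr => m _.
rewrite /dot sum_triple; apply: eq_bigr => a _; rewrite exchange_big; apply: eq_bigr => c _.
by apply: eq_bigr => b _; rewrite mulrC.
Qed.

End Gram.

Lemma sum_contract_sqnorm (Jr Jm : finType) (Z : Jr -> Jm -> (I * I * I)%type -> C) (U : op C I) :
  \sum_(j : Jr * Jm * I) (contract U (Z j.1.1 j.1.2) j.2)^* * contract U (Z j.1.1 j.1.2) j.2 =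
  \sum_r \sum_m dot (contract U (Z r m)) (contract U (Z r m)).
Proof. exact: sum_triple. Qed.

Lemma fidelity_pair_le M rho (U0 U1 : op C I) :
  (0 < d)%N -> psd M -> psd rho -> unitary U0 -> unitary U1 ->
  psiplus_fidelity (ptr_keep ord0 (opmul (liftA M) (Omega rho))) U0 +
  psiplus_fidelity (ptr_keep (lift ord0 ord0) (opmul (liftA M) (Omega rho))) U1
  <= (d%:R + 1) / d%:R * \sum_p ptr_keep ord0 (opmul (liftA M) (Omega rho)) p p.
Proof.
move=> d_gt0 /psd_gram[nm [fm M_gram]] /psd_gram[nr [fr rho_gram]] unitaryU0 unitaryU1.
set X := amplitude fr fm.
rewrite (@psiplus_fidelity_gram _ _ (fun j a b => X j.1.1 j.1.2 (a, j.2, b)) _ _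
          (ptr_keep0_gram M_gram rho_gram)).
rewrite (@psiplus_fidelity_gram _ _ (fun j a b => X j.1.1 j.1.2 (j.2, a, b)) _ _
          (ptr_keep1_gram M_gram rho_gram)).
rewrite (sum_contract_sqnorm X U0) (sum_contract_sqnorm (fun r m => X r m \o @swap12 _ _ _) U1).
rewrite (sum_ptr_keep0_gram M_gram rho_gram).
set k := (d%:R * d%:R)^-1; set S := \sum_r \sum_m dot (X r m) (X r m).
have -> : (d%:R + 1) / d%:R * (k * S) = d%:R^-1 * (k * ((d%:R + 1) * S)) by ring.
rewrite -!mulrDr; apply: ler_wpM2l; first by rewrite invr_ge0.
apply: ler_wpM2l; first by rewrite /k invr_ge0 mulr_ge0.
rewrite -big_split mulr_sumr; apply: ler_sum => r _.
rewrite -big_split mulr_sumr; apply: ler_sum => m _.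
exact: contract_sqnorm_le.
Qed.

Lemma sum_outcome_trace K (M : 'I_K -> op C (I * I * I)%type) rho :
  (forall x y, \sum_(i < K) M i x y = @idop C _ x y) -> trace rho = 1 -> (0 < d)%N ->
  \sum_i \sum_p ptr_keep ord0 (opmul (liftA (M i)) (Omega rho)) p p = 1.
Proof.
move=> M_sum rho_tr d_gt0.
under eq_bigr do under eq_bigr do rewrite ptr_keep0E.
rewrite exchange_big.
transitivity (\sum_(p : I * I) (d%:R * d%:R)^-1 * \sum_(c < d) \sum_(t < d) rho (t, p.2) (t, p.2)).
  apply: eq_bigr => -[p1 p2] _ /=; rewrite -mulr_sumr; congr (_ * _).
  rewrite exchange_big; apply: eq_bigr => c _; rewrite exchange_big; apply: eq_bigr => t _.
  rewrite exchange_big (big_only1 t) // => [|s st _].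
    by rewrite -mulr_suml M_sum /idop eqxx mul1r.
  by rewrite -mulr_suml M_sum /idop !xpair_eqE !eqxx /= eq_sym (negbTE st) mul0r.
rewrite sum_pair.
transitivity (\sum_(p1 < d) \sum_(c < d) (d%:R * d%:R)^-1 * trace rho).
  apply: eq_bigr => p1 _; rewrite -!mulr_sumr exchange_big; congr (_ * _).
  by apply: eq_bigr => c _; rewrite /trace sum_pair [RHS]exchange_big.
rewrite rho_tr mulr1 !sumr_const card_ord -mulr_natr; field.
by rewrite pnatr_eq0 -lt0n.
Qed.

End Protocol.

Theorem proposition2 (R : realType) (d : nat) (hd : (2 <= d)%N) (K : nat) (hK : (0 < K)%N)
  (rho : op R[i] ('I_d * 'I_d)%type) (M : 'I_K -> op R[i] ('I_d * 'I_d * 'I_d)%type)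
  (U : 'I_K -> 'I_2 -> op R[i] 'I_d) :
  density rho -> povm M -> (forall i j, unitary (U i j)) ->
  Psucc rho M U <= (d%:R + 1) / (2 * d%:R).
Proof.
move=> [rho_psd rho_tr] [M_psd M_sum] unitaryU.
have d_gt0 : (0 < d)%N by apply: leq_trans hd.
have dn0 : d%:R != 0 :> R[i] by rewrite pnatr_eq0 -lt0n.
rewrite /Psucc big_ord_recl big_ord_recl big_ord0 addr0 -big_split /=.
have -> : (d%:R + 1) / (2 * d%:R) = 2^-1 * \sum_i (d%:R + 1) / d%:R *
            \sum_p ptr_keep ord0 (opmul (liftA (M i)) (Omega rho)) p p :> R[i].
  by rewrite -mulr_sumr sum_outcome_trace //; field.
apply: ler_wpM2l; first by rewrite invr_ge0 ler0n.
apply: ler_sum => i _.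
exact: fidelity_pair_le.
Qed.
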